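(* Let $1<\beta<2$, $m_{-1}=0$ and $m_p=T_\beta^p(\beta/2)$ for $p\ge0$, and assume the points $m_{-1},m_0,m_1,\dots$ are pairwise distinct. Define $\psi_0=(\beta/2)^{-1/2}\mathbf 1_{[0,\beta/2]}$, and for $p\ge1$ let $m_l=\max\{m_j:-1\le j<p,\ m_j<m_p\}$, $m_u=\min\{m_j:-1\le j<p,\ m_j>m_p\}$, $C_p=\sqrt{\frac{(m_p-m_l)(m_u-m_p)}{m_u-m_l}}$, and $$\psi_p(x)=\begin{cases}C_p/(m_p-m_l)&m_l\le x\le m_p\\ -C_p/(m_u-m_p)& m_p<x\le m_u\\ 0&\text{otherwise on }[0,1].\end{cases}$$ Then $\{\psi_p\}_{p\ge0}$ is an orthonormal family in $L^2[0,1]$, and the matrix elements $\langle n|\mathcal L_\beta|m\rangle=\int_0^1\psi_n(x)[\mathcal L_\beta\psi_m](x)\,dx$ satisfy $\langle n|\mathcal L_\beta|m\rangle=0$ whenever $n>m+1$ (upper Hessenberg form).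
   Context: $T_\beta(x)=\beta x$ for $0\le x<\tfrac12$, $T_\beta(x)=\beta(x-\tfrac12)$ for $\tfrac12\le x\le1$. The transfer operator is $[\mathcal L_\beta f](y)=\frac1\beta\left[f\!\left(\frac y\beta\right)+f\!\left(\frac y\beta+\frac12\right)\right]$ for $0\le y\le\beta/2$ and $[\mathcal L_\beta f](y)=0$ for $\beta/2<y\le1$. (Note $m_p\in(0,\beta/2)$ for $p\ge1$ under the distinctness assumption, so $m_l,m_u$ exist.) *)

From Stdlib Require Import Reals Lra List.
Import ListNotations.
Open Scope R_scope.

Definition Tb (beta x : R) : R :=
  if Rlt_dec x (1/2) then beta * x else beta * (x - 1/2).

Definition mpt (beta : R) (p : nat) : R := Nat.iter p (Tb beta) (beta / 2).

(* The points m_j, -1 <= j < p : 0 together with m_0, ..., m_{p-1}. *)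
Definition cands (beta : R) (p : nat) : list R := 0 :: map (mpt beta) (seq 0 p).

(* m_l = max { m_j : -1 <= j < p, m_j < m_p } (default 0 if the set is empty) *)
Definition m_low (beta : R) (p : nat) : R :=
  match fold_right (fun x acc =>
          if Rlt_dec x (mpt beta p) then
            match acc with None => Some x | Some a => Some (Rmax x a) end
          else acc) None (cands beta p) with
  | Some a => a | None => 0 end.

(* m_u = min { m_j : -1 <= j < p, m_j > m_p } (default 1 if the set is empty) *)
Definition m_up (beta : R) (p : nat) : R :=
  match fold_right (fun x acc =>
          if Rlt_dec (mpt beta p) x then
            match acc with None => Some x | Some a => Some (Rmin x a) end
          else acc) None (cands beta p) with
  | Some a => a | None => 1 end.

Definition Cp (beta : R) (p : nat) : R :=
  let ml := m_low beta p in let mu := m_up beta p in let mp := mpt beta p in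
  sqrt ((mp - ml) * (mu - mp) / (mu - ml)).

Definition psi (beta : R) (p : nat) (x : R) : R :=
  match p with
  | O => if Rle_dec 0 x then if Rle_dec x (beta / 2) then / sqrt (beta / 2) else 0 else 0
  | S _ =>
    let ml := m_low beta p in let mu := m_up beta p in let mp := mpt beta p in
    if Rle_dec 0 x then if Rle_dec x 1 then
      if Rle_dec ml x then
        if Rle_dec x mp then Cp beta p / (mp - ml)
        else if Rle_dec x mu then - (Cp beta p / (mu - mp)) else 0
      else 0
    else 0 else 0
  end.

Definition Lb (beta : R) (f : R -> R) (y : R) : R :=
  if Rle_dec 0 y then
    if Rle_dec y (beta / 2) then / beta * (f (y / beta) + f (y / beta + 1/2)) else 0
  else 0.

From Stdlib Require Import Reals Lra List Lia.
From Coquelicot Require Import Coquelicot.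
Import ListNotations.
Open Scope R_scope.

(* For p >= 1, psi_p is a Haar-type function on [m_l, m_u]: constant on
   (m_l, m_p) and on (m_p, m_u), with integral zero, so for any g that is
   constant c on (m_l, m_p) and d on (m_p, m_u) the integral of psi_p g is
   C_p (c - d); the constant C_p makes the norm equal to 1.  By the choice of
   m_l and m_u, no point m_j with j < p lies in the gap (m_l, m_u).  For q < p,
   psi_q jumps only at 0, 1 and points m_j with j <= q, so it is constant on
   the gap and orthogonal to psi_p.  Likewise L_beta psi_m jumps only at 0,
   beta/2 and at the points beta s and beta (s - 1/2) for the jumps s of psi_m;
   one of these two is T_beta s, a point m_j with j <= m + 1, and the other lies
   outside (0, beta/2).  Hence L_beta psi_m is constant on the gap of psi_n as
   soon as n >= m + 2. *)

Lemma RiemannInt_of_is_RInt (f : R -> R) (v : R) : is_RInt f 0 1 v ->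
  exists pr : Riemann_integrable f 0 1, RiemannInt pr = v.
Proof.
  intros H. exists (ex_RInt_Reals_0 f 0 1 (ex_intro _ v H)).
  rewrite <- RInt_Reals. now apply is_RInt_unique.
Qed.

Lemma is_RInt_const_on (f : R -> R) (a b c : R) : a <= b ->
  (forall x, a < x < b -> f x = c) -> is_RInt f a b (c * (b - a)).
Proof.
  intros Hab Hf. apply is_RInt_ext with (fun _ => c).
  - rewrite (Rmin_left a b Hab), (Rmax_right a b Hab). intros x Hx; symmetry; now apply Hf.
  - replace (c * (b - a)) with (scal (b - a) c) by (cbn; unfold mult; cbn; ring).
    apply (@is_RInt_const R_NormedModule).
Qed.

Lemma is_RInt_Chasles_eq (f : R -> R) (a b c l1 l2 l : R) :
  is_RInt f a b l1 -> is_RInt f b c l2 -> l = l1 + l2 -> is_RInt f a c l.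
Proof. intros H1 H2 ->. exact (is_RInt_Chasles f a b c l1 l2 H1 H2). Qed.

Lemma is_RInt_eq (f : R -> R) (a b l l' : R) : is_RInt f a b l -> l = l' -> is_RInt f a b l'.
Proof. now intros H <-. Qed.

Definition piecewise_const (S : list R) (f : R -> R) : Prop :=
  forall a b, (forall s, In s S -> s <= a \/ b <= s) ->
  exists c, forall x, a < x < b -> f x = c.

Lemma piecewise_const_const (S : list R) (c : R) : piecewise_const S (fun _ => c).
Proof. intros a b _. now exists c. Qed.

Lemma piecewise_const_incl (S S' : list R) (f : R -> R) :
  incl S S' -> piecewise_const S f -> piecewise_const S' f.
Proof. intros HS Hf a b Hab. apply Hf. intros s Hs. now apply Hab, HS. Qed.

Lemma piecewise_const_map2 (op : R -> R -> R) (S : list R) (f g : R -> R) :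
  piecewise_const S f -> piecewise_const S g ->
  piecewise_const S (fun x => op (f x) (g x)).
Proof.
  intros Hf Hg a b Hab.
  destruct (Hf a b Hab) as [cf Hcf], (Hg a b Hab) as [cg Hcg].
  exists (op cf cg). intros x Hx. now rewrite Hcf, Hcg.
Qed.

Lemma piecewise_const_if_le (S : list R) (s : R) (f g : R -> R) : In s S ->
  piecewise_const S f -> piecewise_const S g ->
  piecewise_const S (fun x => if Rle_dec s x then f x else g x).
Proof.
  intros Hs Hf Hg a b Hab.
  destruct (Hf a b Hab) as [cf Hcf], (Hg a b Hab) as [cg Hcg].
  destruct (Hab s Hs); [exists cf | exists cg];
    intros x Hx; destruct (Rle_dec s x); (auto || lra).
Qed.

Lemma piecewise_const_if_ge (S : list R) (s : R) (f g : R -> R) : In s S ->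
  piecewise_const S f -> piecewise_const S g ->
  piecewise_const S (fun x => if Rle_dec x s then f x else g x).
Proof.
  intros Hs Hf Hg a b Hab.
  destruct (Hf a b Hab) as [cf Hcf], (Hg a b Hab) as [cg Hcg].
  destruct (Hab s Hs); [exists cg | exists cf];
    intros x Hx; destruct (Rle_dec x s); (auto || lra).
Qed.

Lemma piecewise_const_shift (S : list R) (t : R) (f : R -> R) : piecewise_const S f ->
  piecewise_const (map (fun s => s - t) S) (fun y => f (y + t)).
Proof.
  intros Hf a b Hab. destruct (Hf (a + t) (b + t)) as [c Hc].
  - intros s Hs. destruct (Hab (s - t)); [exact (in_map (fun s => s - t) S s Hs) | left | right]; lra.
  - exists c. intros x Hx. apply Hc. lra.
Qed.

Lemma piecewise_const_scale (S : list R) (k : R) (f : R -> R) : 0 < k ->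
  piecewise_const S f -> piecewise_const (map (Rmult k) S) (fun y => f (y / k)).
Proof.
  intros Hk Hf a b Hab. destruct (Hf (a / k) (b / k)) as [c Hc].
  - intros s Hs. assert (Ha : a = k * (a / k)) by (field; lra).
    assert (Hb : b = k * (b / k)) by (field; lra).
    destruct (Hab (k * s)); [exact (in_map (Rmult k) S s Hs) | left | right]; nra.
  - exists c. intros x Hx. apply Hc.
    assert (x = k * (x / k)) by (field; lra).
    assert (a = k * (a / k)) by (field; lra). assert (b = k * (b / k)) by (field; lra).
    split; nra.
Qed.

Ltac piecewise_const_by_cases :=
  repeat first
    [ apply piecewise_const_const
    | apply piecewise_const_if_le; [cbn [In]; tauto | | ]
    | apply piecewise_const_if_ge; [cbn [In]; tauto | | ] ].

Definition Lb_breaks (beta : R) (S : list R) : list R :=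
  0 :: beta / 2 :: map (Rmult beta) S ++ map (Rmult beta) (map (fun s => s - 1/2) S).

Lemma piecewise_const_Lb (beta : R) (S : list R) (f : R -> R) : 0 < beta ->
  piecewise_const S f -> piecewise_const (Lb_breaks beta S) (Lb beta f).
Proof.
  intros Hb Hf. unfold Lb, Lb_breaks. piecewise_const_by_cases.
  apply (piecewise_const_map2 Rmult); [apply piecewise_const_const |].
  apply (piecewise_const_map2 Rplus).
  - apply piecewise_const_incl with (map (Rmult beta) S).
    + intros s Hs. do 2 right. apply in_or_app. now left.
    + now apply piecewise_const_scale.
  - apply piecewise_const_incl with (map (Rmult beta) (map (fun s => s - 1/2) S)).
    + intros s Hs. do 2 right. apply in_or_app. now right.
    + apply piecewise_const_scale with (f := fun z => f (z + 1/2)); [exact Hb |].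
      now apply piecewise_const_shift.
Qed.

Definition max_below (v : R) : list R -> option R :=
  fold_right (fun x acc =>
    if Rlt_dec x v then
      match acc with None => Some x | Some a => Some (Rmax x a) end
    else acc) None.

Definition min_above (v : R) : list R -> option R :=
  fold_right (fun x acc =>
    if Rlt_dec v x then
      match acc with None => Some x | Some a => Some (Rmin x a) end
    else acc) None.

Lemma max_below_spec (v : R) (l : list R) :
  match max_below v l with
  | None => forall x, In x l -> ~ x < v
  | Some a => In a l /\ a < v /\ forall x, In x l -> x < v -> x <= a
  end.
Proof.
  induction l as [|y l IH]; cbn; auto.
  destruct (Rlt_dec y v) as [Hy|Hy]; destruct (max_below v l) as [a|].
  - destruct IH as (Ha & Hav & Hmax). unfold Rmax; destruct (Rle_dec y a);
      repeat split; auto; intros x [<-|Hx] Hxv; auto; try lra.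
    specialize (Hmax x Hx Hxv); lra.
  - repeat split; auto. intros x [<-|Hx] Hxv; [lra | now destruct (IH x Hx)].
  - destruct IH as (Ha & Hav & Hmax). repeat split; auto.
    intros x [<-|Hx] Hxv; [contradiction | auto].
  - intros x [<-|Hx]; auto.
Qed.

Lemma min_above_spec (v : R) (l : list R) :
  match min_above v l with
  | None => forall x, In x l -> ~ v < x
  | Some a => In a l /\ v < a /\ forall x, In x l -> v < x -> a <= x
  end.
Proof.
  induction l as [|y l IH]; cbn; auto.
  destruct (Rlt_dec v y) as [Hy|Hy]; destruct (min_above v l) as [a|].
  - destruct IH as (Ha & Hav & Hmin). unfold Rmin; destruct (Rle_dec y a);
      repeat split; auto; intros x [<-|Hx] Hxv; auto; try lra.
    specialize (Hmin x Hx Hxv); lra.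
  - repeat split; auto. intros x [<-|Hx] Hxv; [lra | now destruct (IH x Hx)].
  - destruct IH as (Ha & Hav & Hmin). repeat split; auto.
    intros x [<-|Hx] Hxv; [contradiction | auto].
  - intros x [<-|Hx]; auto.
Qed.

Lemma in_cands (beta : R) (p : nat) (x : R) :
  In x (cands beta p) <-> x = 0 \/ exists j, (j < p)%nat /\ x = mpt beta j.
Proof.
  unfold cands; cbn. rewrite in_map_iff. split.
  - intros [H|(j & Hj & Hin)]; [now left | right].
    exists j. rewrite in_seq in Hin. split; [lia | auto].
  - intros [H|(j & Hj & ->)]; [now left | right].
    exists j. rewrite in_seq. split; [auto | lia].
Qed.

Lemma cands_mono (beta : R) (j k : nat) (x : R) :
  (j <= k)%nat -> In x (cands beta j) -> In x (cands beta k).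
Proof.
  intros Hjk. rewrite !in_cands.
  intros [->|(i & Hi & ->)]; [now left | right; exists i; split; [lia | auto]].
Qed.

Lemma Tb_cands (beta : R) (p : nat) (x : R) :
  In x (cands beta p) -> In (Tb beta x) (cands beta (S p)).
Proof.
  rewrite !in_cands. intros [->|(j & Hj & ->)].
  - left. unfold Tb. destruct (Rlt_dec 0 (1/2)); lra.
  - right. exists (S j). split; [lia | reflexivity].
Qed.

Section Gaps.

Variable beta : R.
Hypothesis hb1 : 1 < beta.
Hypothesis hb2 : beta < 2.
Hypothesis hdist0 : forall p : nat, mpt beta p <> 0.
Hypothesis hdist : forall i j : nat, i <> j -> mpt beta i <> mpt beta j.

Lemma mpt_range (p : nat) : 0 <= mpt beta p <= beta / 2.
Proof.
  induction p as [|p IH]; [cbn; lra|].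
  change (mpt beta (S p)) with (Tb beta (mpt beta p)). unfold Tb.
  destruct (Rlt_dec (mpt beta p) (1/2)); nra.
Qed.

Lemma cands_range (p : nat) (x : R) : In x (cands beta p) -> 0 <= x <= beta / 2.
Proof. rewrite in_cands. intros [->|(j & _ & ->)]; [lra | apply mpt_range]. Qed.

Lemma m_low_spec (p : nat) :
  In (m_low beta p) (cands beta p) /\ m_low beta p < mpt beta p /\
  forall x, In x (cands beta p) -> x < mpt beta p -> x <= m_low beta p.
Proof.
  pose proof (max_below_spec (mpt beta p) (cands beta p)) as H.
  unfold m_low. fold (max_below (mpt beta p) (cands beta p)).
  destruct (max_below (mpt beta p) (cands beta p)); [exact H|].
  exfalso. apply (H 0); [now left|].
  pose proof (mpt_range p). pose proof (hdist0 p). lra.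
Qed.

Lemma m_up_spec (p : nat) : (1 <= p)%nat ->
  In (m_up beta p) (cands beta p) /\ mpt beta p < m_up beta p /\
  forall x, In x (cands beta p) -> mpt beta p < x -> m_up beta p <= x.
Proof.
  intros Hp. pose proof (min_above_spec (mpt beta p) (cands beta p)) as H.
  unfold m_up. fold (min_above (mpt beta p) (cands beta p)).
  destruct (min_above (mpt beta p) (cands beta p)); [exact H|].
  exfalso. apply (H (mpt beta 0)).
  - apply in_cands. right. exists 0%nat. split; [lia | reflexivity].
  - assert (mpt beta p <> mpt beta 0) by (apply hdist; lia).
    pose proof (mpt_range p). cbn in *. lra.
Qed.

Lemma gap_order (p : nat) : (1 <= p)%nat ->
  0 <= m_low beta p /\ m_low beta p < mpt beta p /\
  mpt beta p < m_up beta p /\ m_up beta p <= beta / 2.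
Proof.
  intros Hp. destruct (m_low_spec p) as (Hl & Hlp & _).
  destruct (m_up_spec p Hp) as (Hu & Hpu & _).
  pose proof (cands_range _ _ Hl). pose proof (cands_range _ _ Hu). lra.
Qed.

Definition off_gap (p : nat) (s : R) : Prop := s <= m_low beta p \/ m_up beta p <= s.

Lemma cands_off_gap (p : nat) (x : R) : (1 <= p)%nat -> In x (cands beta p) -> off_gap p x.
Proof.
  intros Hp Hx. destruct (m_low_spec p) as (_ & _ & Hmax).
  destruct (m_up_spec p Hp) as (_ & _ & Hmin).
  assert (x <> mpt beta p).
  { apply in_cands in Hx. destruct Hx as [->|(j & Hj & ->)].
    - intros E. now apply (hdist0 p).
    - apply hdist. lia. }
  destruct (Rlt_dec x (mpt beta p)); [left; auto | right; apply Hmin; auto; lra].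
Qed.

Lemma off_gap_nonpos (p : nat) (x : R) : (1 <= p)%nat -> x <= 0 -> off_gap p x.
Proof. intros Hp Hx. destruct (gap_order p Hp). left; lra. Qed.

Lemma off_gap_ge (p : nat) (x : R) : (1 <= p)%nat -> beta / 2 <= x -> off_gap p x.
Proof. intros Hp Hx. destruct (gap_order p Hp) as (_ & _ & _ & ?). right; lra. Qed.

Lemma Tb_branches_off_gap (n p : nat) (s : R) : (1 <= n)%nat -> (S p <= n)%nat ->
  In s (cands beta p) -> off_gap n (beta * s) /\ off_gap n (beta * (s - 1/2)).
Proof.
  intros Hn Hpn Hs.
  assert (HT : off_gap n (Tb beta s))
    by (apply cands_off_gap; auto; apply cands_mono with (S p); auto; now apply Tb_cands).
  pose proof (cands_range _ _ Hs).
  unfold Tb in HT. destruct (Rlt_dec s (1/2)); split; auto.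
  - apply off_gap_nonpos; auto. nra.
  - apply off_gap_ge; auto. nra.
Qed.

Lemma psi_0_inside (x : R) : 0 < x < beta / 2 -> psi beta 0 x = / sqrt (beta / 2).
Proof.
  intros Hx. unfold psi. destruct (Rle_dec 0 x), (Rle_dec x (beta / 2)); lra.
Qed.

Lemma psi_0_outside (x : R) : beta / 2 < x -> psi beta 0 x = 0.
Proof. intros Hx. unfold psi. destruct (Rle_dec 0 x), (Rle_dec x (beta / 2)); lra. Qed.

Ltac psi_by_cases p :=
  destruct p as [|k]; [lia|]; unfold psi; cbv zeta;
  repeat match goal with |- context [Rle_dec ?u ?v] => destruct (Rle_dec u v) end;
  first [reflexivity | lra].

Section Psi_values.

Variable p : nat.
Hypothesis Hp : (1 <= p)%nat.

Lemma psi_left (x : R) : m_low beta p < x < mpt beta p ->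
  psi beta p x = Cp beta p / (mpt beta p - m_low beta p).
Proof. intros Hx. destruct (gap_order p Hp). psi_by_cases p. Qed.

Lemma psi_right (x : R) : mpt beta p < x < m_up beta p ->
  psi beta p x = - (Cp beta p / (m_up beta p - mpt beta p)).
Proof. intros Hx. destruct (gap_order p Hp) as (? & ? & ? & ?). psi_by_cases p. Qed.

Lemma psi_outside (x : R) : x < m_low beta p \/ m_up beta p < x -> psi beta p x = 0.
Proof. intros Hx. destruct (gap_order p Hp) as (? & ? & ? & ?). psi_by_cases p. Qed.

End Psi_values.

Lemma is_RInt_psi_mul (p : nat) (g : R -> R) (c d : R) : (1 <= p)%nat ->
  (forall x, m_low beta p < x < mpt beta p -> g x = c) ->
  (forall x, mpt beta p < x < m_up beta p -> g x = d) ->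
  is_RInt (fun x => psi beta p x * g x) 0 1 (Cp beta p * (c - d)).
Proof.
  intros Hp Hc Hd. destruct (gap_order p Hp) as (O1 & O2 & O3 & O4).
  pose proof (psi_left p Hp) as Hleft. pose proof (psi_right p Hp) as Hright.
  pose proof (psi_outside p Hp) as Hout.
  set (ml := m_low beta p) in *. set (mp := mpt beta p) in *.
  set (mu := m_up beta p) in *. set (C := Cp beta p) in *.
  apply is_RInt_Chasles_eq with ml 0 (C * (c - d)); [| | ring].
  { replace 0 with (0 * (ml - 0)) at 2 by ring. apply is_RInt_const_on; [lra|].
    intros x Hx. rewrite Hout by (left; lra). ring. }
  apply is_RInt_Chasles_eq with mp (C / (mp - ml) * c * (mp - ml)) (C * - d);
    [| | field; lra].
  { apply is_RInt_const_on; [lra|]. intros x Hx. now rewrite Hleft, Hc. }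
  apply is_RInt_Chasles_eq with mu (- (C / (mu - mp)) * d * (mu - mp)) (0 * (1 - mu));
    [| | field; lra].
  { apply is_RInt_const_on; [lra|]. intros x Hx. now rewrite Hright, Hd. }
  apply is_RInt_const_on; [lra|]. intros x Hx. rewrite Hout by (right; lra). ring.
Qed.

Lemma psi_orthogonal_piecewise_const (p : nat) (S : list R) (g : R -> R) :
  (1 <= p)%nat -> piecewise_const S g -> (forall s, In s S -> off_gap p s) ->
  is_RInt (fun x => psi beta p x * g x) 0 1 0.
Proof.
  intros Hp Hg HS. destruct (gap_order p Hp).
  destruct (Hg _ _ HS) as [c Hc].
  apply is_RInt_eq with (Cp beta p * (c - c)); [|ring].
  apply is_RInt_psi_mul; auto; intros x Hx; apply Hc; lra.
Qed.

Lemma is_RInt_psi_sqr (p : nat) : is_RInt (fun x => psi beta p x * psi beta p x) 0 1 1.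
Proof.
  destruct (Nat.eq_dec p 0) as [->|Hp].
  - assert (Hs : / sqrt (beta / 2) * / sqrt (beta / 2) = / (beta / 2))
      by (rewrite <- Rinv_mult, sqrt_sqrt; lra).
    apply is_RInt_Chasles_eq with (beta / 2)
      (/ sqrt (beta / 2) * / sqrt (beta / 2) * (beta / 2 - 0)) (0 * (1 - beta / 2)).
    + apply is_RInt_const_on; [lra|]. intros x Hx. now rewrite psi_0_inside.
    + apply is_RInt_const_on; [lra|]. intros x Hx. rewrite psi_0_outside by lra. ring.
    + rewrite Hs. field. lra.
  - assert (H1 : (1 <= p)%nat) by lia.
    destruct (gap_order p H1) as (O1 & O2 & O3 & O4).
    set (ml := m_low beta p) in *. set (mp := mpt beta p) in *. set (mu := m_up beta p) in *.
    assert (HC : Cp beta p * Cp beta p = (mp - ml) * (mu - mp) / (mu - ml)).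
    { apply sqrt_sqrt. apply Rmult_le_pos; [nra | left; apply Rinv_0_lt_compat; lra]. }
    apply is_RInt_eq with (Cp beta p * (Cp beta p / (mp - ml) - - (Cp beta p / (mu - mp)))).
    + apply is_RInt_psi_mul; auto; [apply psi_left | apply psi_right]; auto.
    + transitivity (Cp beta p * Cp beta p * (/ (mp - ml) + / (mu - mp))); [field; lra|].
      rewrite HC. field. lra.
Qed.

Definition psi_breaks (q : nat) : list R :=
  match q with
  | O => [0; beta / 2]
  | S _ => [0; 1; m_low beta q; mpt beta q; m_up beta q]
  end.

Lemma piecewise_const_psi (q : nat) : piecewise_const (psi_breaks q) (psi beta q).
Proof. destruct q; unfold psi, psi_breaks; cbv zeta; piecewise_const_by_cases. Qed.

Lemma psi_breaks_cands (q : nat) (s : R) :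
  In s (psi_breaks q) -> s = 1 \/ In s (cands beta (S q)).
Proof.
  destruct q as [|k]; cbn [psi_breaks In].
  - intros [<-|[<-|[]]]; right; apply in_cands; [now left|].
    right. exists 0%nat. split; [lia | reflexivity].
  - intros [<-|[<-|[<-|[<-|[<-|[]]]]]].
    + right. now left.
    + now left.
    + right. apply cands_mono with (S k); [lia|]. apply m_low_spec.
    + right. apply in_cands. right. exists (S k). split; [lia | reflexivity].
    + right. apply cands_mono with (S k); [lia|]. apply m_up_spec. lia.
Qed.

Lemma psi_orthogonal (p q : nat) : (q < p)%nat ->
  is_RInt (fun x => psi beta p x * psi beta q x) 0 1 0.
Proof.
  intros Hqp. assert (Hp : (1 <= p)%nat) by lia.
  apply psi_orthogonal_piecewise_const with (psi_breaks q); auto.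
  - apply piecewise_const_psi.
  - intros s Hs. destruct (psi_breaks_cands q s Hs) as [->|Hs'].
    + apply off_gap_ge; auto. lra.
    + apply cands_off_gap; auto. now apply cands_mono with (S q).
Qed.

Lemma Lb_breaks_psi_off_gap (n m : nat) (s : R) : (m + 2 <= n)%nat ->
  In s (Lb_breaks beta (psi_breaks m)) -> off_gap n s.
Proof.
  intros Hmn Hs. assert (Hn : (1 <= n)%nat) by lia.
  destruct Hs as [<-|[<-|Hs]]; [apply off_gap_nonpos | apply off_gap_ge | ]; auto; try lra.
  apply in_app_or in Hs.
  destruct Hs as [Hs|Hs]; apply in_map_iff in Hs;
    [destruct Hs as (t & <- & Ht) | destruct Hs as (u & <- & Hu)].
  - destruct (psi_breaks_cands m t Ht) as [->|Hc]; [apply off_gap_ge; auto; lra|].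
    exact (proj1 (Tb_branches_off_gap n (S m) t Hn ltac:(lia) Hc)).
  - apply in_map_iff in Hu. destruct Hu as (t & <- & Ht).
    destruct (psi_breaks_cands m t Ht) as [->|Hc]; [apply off_gap_ge; auto; lra|].
    exact (proj2 (Tb_branches_off_gap n (S m) t Hn ltac:(lia) Hc)).
Qed.

Lemma Lb_psi_hessenberg (n m : nat) : (m + 2 <= n)%nat ->
  is_RInt (fun x => psi beta n x * Lb beta (psi beta m) x) 0 1 0.
Proof.
  intros Hmn.
  apply psi_orthogonal_piecewise_const with (Lb_breaks beta (psi_breaks m)).
  - lia.
  - apply piecewise_const_Lb; [lra | apply piecewise_const_psi].
  - intros s. now apply Lb_breaks_psi_off_gap.
Qed.

End Gaps.

Theorem mainTheorem8 (beta : R) (hb1 : 1 < beta) (hb2 : beta < 2)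
  (hdist0 : forall p : nat, mpt beta p <> 0)
  (hdist : forall i j : nat, i <> j -> mpt beta i <> mpt beta j) :
  (forall n m : nat,
     exists pr : Riemann_integrable (fun x => psi beta n x * psi beta m x) 0 1,
       RiemannInt pr = if Nat.eq_dec n m then 1 else 0)
  /\
  (forall n m : nat, (n > m + 1)%nat ->
     exists pr : Riemann_integrable (fun x => psi beta n x * Lb beta (psi beta m) x) 0 1,
       RiemannInt pr = 0).
Proof.
  split.
  - intros n m. apply RiemannInt_of_is_RInt.
    destruct (Nat.eq_dec n m) as [<-|Hnm]; [now apply is_RInt_psi_sqr|].
    destruct (Nat.lt_gt_cases n m) as [[Hlt|Hgt] _]; [exact Hnm| |].
    + apply is_RInt_ext with (fun x => psi beta m x * psi beta n x).
      * intros x _. apply Rmult_comm.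
      * now apply psi_orthogonal.
    + now apply psi_orthogonal.
  - intros n m Hnm. apply RiemannInt_of_is_RInt. apply Lb_psi_hessenberg; auto. lia.
Qed.
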